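(* Let $\omega\ge1$ and $\Lambda\ge2\omega-1$ be integers, $P,\sigma^2>0$, $\textsf{snr}=P/\sigma^2$, $\kappa=\frac{\Lambda+\omega-1}{\Lambda}$, and $0<R<\frac{1}{2\kappa}\ln(1+\kappa\,\textsf{snr})$. Consider the asymptotic state evolution in the context. Then: (1) If $\omega>\big(\frac{1}{e^{2R\kappa}-1}-\frac{1}{\kappa\,\textsf{snr}}\big)^{-1}$, then $\bar\psi^1_1=\bar\psi^1_\Lambda=0$. (2) Let $X=\omega\cdot\frac{1+\kappa\,\textsf{snr}}{(\kappa\,\textsf{snr})^2}\big[\ln(1+\kappa\,\textsf{snr})-2R\kappa\big]$. For every integer $c$ with $1\le c\le\omega-1$ and $c<X$, $\bar\psi^1_c=\bar\psi^1_{\Lambda+1-c}=0$. (3) If for some integer $c_0$ with $1\le c_0\le\omega-1$ one has $\bar\psi^1_c=0$ for all $c\le c_0$ and all $c\ge\Lambda+1-c_0$, then for every $t\ge1$, $\bar\psi^t_c=0$ for all $c\in[\Lambda]$ with $\min(c,\Lambda+1-c)\le tc_0$; in particular $\bar\psi^t_c=0$ for all $c\in[\Lambda]$ once $t\ge\lceil\Lambda/(2c_0)\rceil$.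
   Context: Asymptotic state evolution for an $(\omega,\Lambda)$ base matrix (rates in nats): initialize $\bar\psi^0_c=1$ for $c\in[\Lambda]$; for $t=0,1,2,\dots$, $$\bar\phi^t_r=\sigma^2\Big(1+\frac{\kappa\,\textsf{snr}}{\omega}\sum_{c=\underline c_r}^{\overline c_r}\bar\psi^t_c\Big),\quad r\in[\Lambda+\omega-1],$$ $$\bar\psi^{t+1}_c=1-\mathbf 1\Big\{\frac{P}{\omega}\sum_{r=c}^{c+\omega-1}\frac{1}{\bar\phi^t_r}>2R\Big\},\quad c\in[\Lambda],$$ where $\underline c_r=\max\{1,r-\omega+1\}$ and $\overline c_r=\min\{r,\Lambda\}$. (This corresponds to the base matrix with $L_R=\Lambda+\omega-1$ rows, $L_C=\Lambda$ columns, $W_{rc}=P\frac{\Lambda+\omega-1}{\omega}$ if $c\le r\le c+\omega-1$ and $0$ otherwise; $\bar\psi^t_c=0$ means column block $c$ is decoded at iteration $t$.) *)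

From Stdlib Require Import Reals Lra Lia Arith.
Open Scope R_scope.

(* sumR lo hi f = sum_{i=lo}^{hi} f i  (empty, i.e. 0, if hi < lo) *)
Fixpoint sumR_aux (lo k : nat) (f : nat -> R) : R :=
  match k with
  | O => 0
  | S k' => f lo + sumR_aux (S lo) k' f
  end.
Definition sumR (lo hi : nat) (f : nat -> R) : R :=
  sumR_aux lo (S hi - lo) f.

Definition kappa (omega Lam : nat) : R := INR (Lam + omega - 1) / INR Lam.
Definition snr (P sigma2 : R) : R := P / sigma2.

(* Lower / upper column indices for row r: max(1, r-omega+1), min(r, Lam) *)
Definition clo (omega r : nat) : nat := Nat.max 1 (r + 1 - omega).
Definition chi (Lam r : nat) : nat := Nat.min r Lam.

(* psibar P sigma2 Rt omega Lam t c = \bar\psi^t_c  (meaningful for c in [1,Lam]) *)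
Fixpoint psibar (P sigma2 Rt : R) (omega Lam : nat) (t : nat) (c : nat) : R :=
  match t with
  | O => 1
  | S t' =>
      let phi := fun r : nat =>
        sigma2 * (1 + kappa omega Lam * snr P sigma2 / INR omega *
                      sumR (clo omega r) (chi Lam r)
                        (fun c' => psibar P sigma2 Rt omega Lam t' c')) in
      if Rlt_dec (2 * Rt) (P / INR omega * sumR c (c + omega - 1) (fun r => 1 / phi r))
      then 0 else 1
  end.

Definition phibar (P sigma2 Rt : R) (omega Lam : nat) (t r : nat) : R :=
  sigma2 * (1 + kappa omega Lam * snr P sigma2 / INR omega *
                sumR (clo omega r) (chi Lam r) (fun c' => psibar P sigma2 Rt omega Lam t c')).

From Stdlib Require Import Reals Lra Lia Arith.
Open Scope R_scope.

(* At time 0 row [r] carries [N_r] undecoded columns, and with [a = kappa snr]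
   column [c] is decoded at time 1 iff [2 R kappa] is below the sum over its
   window of [G (N_r)], where [G x = (a / w) / (1 + a x / w)] is the derivative
   of [L x = ln (1 + a x / w)]. For a column [c <= w] the rows with [N_r = r < w]
   telescope to at least [L w - L c], and elementary bounds on [ln] give (1)
   and (2); the state evolution is symmetric under [c -> Lam + 1 - c], which
   takes care of the right end. For (3): once columns [1..s] are decoded, column
   [c + s] sees at most the interference column [c] saw at time 0, so decoding
   advances by [c0] columns from each end per iteration. *)

Lemma sumR_aux_ext lo k f g :
  (forall i, (lo <= i < lo + k)%nat -> f i = g i) -> sumR_aux lo k f = sumR_aux lo k g.
Proof.
  revert lo; induction k as [|k IH]; intros lo H; simpl; [reflexivity|].
  rewrite H by lia; rewrite (IH (S lo)) by (intros; apply H; lia); reflexivity.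
Qed.

Lemma sumR_aux_le lo k f g :
  (forall i, (lo <= i < lo + k)%nat -> f i <= g i) -> sumR_aux lo k f <= sumR_aux lo k g.
Proof.
  revert lo; induction k as [|k IH]; intros lo H; simpl; [lra|].
  assert (f lo <= g lo) by (apply H; lia).
  assert (sumR_aux (S lo) k f <= sumR_aux (S lo) k g) by (apply IH; intros; apply H; lia).
  lra.
Qed.

Lemma sumR_aux_const lo k x : sumR_aux lo k (fun _ => x) = INR k * x.
Proof.
  revert lo; induction k as [|k IH]; intros lo; simpl sumR_aux; [simpl; ring|].
  rewrite IH, S_INR; ring.
Qed.

Lemma sumR_aux_ge0 lo k f : (forall i, (lo <= i < lo + k)%nat -> 0 <= f i) -> 0 <= sumR_aux lo k f.
Proof.
  intros H; rewrite <- (Rmult_0_r (INR k)), <- (sumR_aux_const lo); now apply sumR_aux_le.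
Qed.

Lemma sumR_aux_scal lo k x f : sumR_aux lo k (fun i => x * f i) = x * sumR_aux lo k f.
Proof. revert lo; induction k as [|k IH]; intros lo; simpl; [ring|]; rewrite IH; ring. Qed.

Lemma sumR_aux_add lo k1 k2 f :
  sumR_aux lo (k1 + k2) f = sumR_aux lo k1 f + sumR_aux (lo + k1) k2 f.
Proof.
  revert lo; induction k1 as [|k1 IH]; intros lo; simpl.
  - rewrite Nat.add_0_r; ring.
  - rewrite IH, <- plus_n_Sm; simpl; ring.
Qed.

Lemma sumR_aux_shift lo d k f : sumR_aux (lo + d) k f = sumR_aux lo k (fun i => f (i + d)%nat).
Proof. revert lo; induction k as [|k IH]; intros lo; simpl; [reflexivity|]; now rewrite <- IH. Qed.

Lemma sumR_aux_rev lo lo' k f :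
  sumR_aux lo k f = sumR_aux lo' k (fun i => f (lo + lo' + k - 1 - i)%nat).
Proof.
  revert lo; induction k as [|k IH]; intros lo; [reflexivity|].
  replace (S k) with (k + 1)%nat at 2 by lia.
  rewrite sumR_aux_add; simpl; rewrite IH, Rplus_0_r, Rplus_comm.
  f_equal; [apply sumR_aux_ext; intros |]; f_equal; lia.
Qed.

Lemma sumR_aux_telescope lo k g h :
  (forall i, (lo <= i < lo + k)%nat -> h (S i) - h i <= g i) ->
  h (lo + k)%nat - h lo <= sumR_aux lo k g.
Proof.
  revert lo; induction k as [|k IH]; intros lo H; simpl.
  - rewrite Nat.add_0_r; lra.
  - assert (h (S lo) - h lo <= g lo) by (apply H; lia).
    assert (h (S lo + k)%nat - h (S lo) <= sumR_aux (S lo) k g) by (apply IH; intros; apply H; lia).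
    replace (lo + S k)%nat with (S lo + k)%nat by lia; lra.
Qed.

Lemma sumR_aux_count lo k A g :
  (forall i, (lo <= i < lo + k)%nat -> 0 <= g i <= 1) ->
  (forall i, (lo <= i < A)%nat -> g i = 0) ->
  sumR_aux lo k g <= INR (lo + k - Nat.max lo A).
Proof.
  revert lo; induction k as [|k IH]; intros lo H01 H0; simpl sumR_aux.
  - apply pos_INR.
  - assert (IHk := IH (S lo) ltac:(intros; apply H01; lia) ltac:(intros; apply H0; lia)).
    destruct (Nat.lt_ge_cases lo A).
    + rewrite H0 by lia.
      replace (lo + S k - Nat.max lo A)%nat with (S lo + k - Nat.max (S lo) A)%nat by lia; lra.
    + replace (lo + S k - Nat.max lo A)%nat with (S (S lo + k - Nat.max (S lo) A)) by lia.
      rewrite S_INR; specialize (H01 lo ltac:(lia)); lra.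
Qed.

Lemma sumR_ext lo hi f g :
  (forall i, (lo <= i <= hi)%nat -> f i = g i) -> sumR lo hi f = sumR lo hi g.
Proof. intros H; apply sumR_aux_ext; intros; apply H; lia. Qed.

Lemma sumR_window c w f : (1 <= w)%nat -> sumR c (c + w - 1) f = sumR_aux c w f.
Proof. intros; unfold sumR; f_equal; lia. Qed.

Lemma sumR_rev lo hi m f :
  (lo <= hi <= m)%nat -> sumR lo hi f = sumR (m - hi) (m - lo) (fun i => f (m - i)%nat).
Proof.
  intros H; unfold sumR.
  replace (S (m - lo) - (m - hi))%nat with (S hi - lo)%nat by lia.
  rewrite (sumR_aux_rev lo (m - hi)); apply sumR_aux_ext; intros; f_equal; lia.
Qed.

Definition logload (a : R) (w : nat) (x : R) : R := ln (1 + a * x / INR w).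
Definition dlogload (a : R) (w : nat) (x : R) : R := a / INR w / (1 + a * x / INR w).

Lemma ln_1plus_lt u : 0 < u -> ln (1 + u) < u.
Proof.
  intros; rewrite <- (ln_exp u) at 2; apply ln_increasing; [lra|]; apply exp_ineq1; lra.
Qed.

Lemma logload_succ_le a w x :
  0 < a -> (1 <= w)%nat -> 0 <= x -> logload a w (x + 1) - logload a w x <= dlogload a w x.
Proof.
  intros Ha Hw Hx; unfold logload, dlogload.
  assert (HW : 0 < INR w) by (apply lt_0_INR; lia).
  assert (Hy : 0 < 1 + a * x / INR w).
  { assert (0 <= a * x / INR w); [|lra].
    apply Rmult_le_pos; [nra | left; apply Rinv_0_lt_compat; lra]. }
  set (y := 1 + a * x / INR w) in *.
  assert (Hu : 0 < a / INR w / y) by (repeat apply Rdiv_lt_0_compat; auto).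
  replace (1 + a * (x + 1) / INR w) with (y * (1 + a / INR w / y))
    by (unfold y in *; field; split; nra).
  rewrite ln_mult by lra; pose proof (ln_1plus_lt _ Hu); lra.
Qed.

Section StateEvolution.

Variables (P s2 Rt : R) (w Lm : nat).

Notation psi := (psibar P s2 Rt w Lm).
Notation phi := (phibar P s2 Rt w Lm).

Lemma psibar_S t c :
  psi (S t) c =
  if Rlt_dec (2 * Rt) (P / INR w * sumR c (c + w - 1) (fun r => 1 / phi t r)) then 0 else 1.
Proof. reflexivity. Qed.

Lemma psibar_0_or_1 t c : psi t c = 0 \/ psi t c = 1.
Proof. destruct t; [now right|]; rewrite psibar_S; destruct Rlt_dec; auto. Qed.

Lemma psibar_S_eq0 t c :
  psi (S t) c = 0 <-> 2 * Rt < P / INR w * sumR c (c + w - 1) (fun r => 1 / phi t r).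
Proof. rewrite psibar_S; destruct Rlt_dec; split; intros; auto; lra. Qed.

Lemma sumR_psibar0 lo hi : sumR lo hi (fun c => psi 0 c) = INR (S hi - lo).
Proof. unfold sumR; change (fun c => psi 0 c) with (fun _ : nat => 1); rewrite sumR_aux_const; ring. Qed.

Hypotheses (Hw : (1 <= w)%nat) (HLm : (1 <= Lm)%nat).

(* The base matrix is invariant under [r -> Lm + w - r], [c -> Lm + 1 - c]. *)
Lemma phibar_rev t r :
  (forall c, (1 <= c <= Lm)%nat -> psi t (Lm + 1 - c) = psi t c) ->
  (1 <= r <= Lm + w - 1)%nat -> phi t (Lm + w - r) = phi t r.
Proof.
  intros Hsym Hr; unfold phibar; do 3 f_equal.
  rewrite (sumR_rev _ _ (Lm + 1)) by (unfold clo, chi; lia).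
  replace (Lm + 1 - chi Lm (Lm + w - r))%nat with (clo w r) by (unfold clo, chi; lia).
  replace (Lm + 1 - clo w (Lm + w - r))%nat with (chi Lm r) by (unfold clo, chi; lia).
  apply sumR_ext; intros c Hc; apply Hsym; unfold clo, chi in Hc; lia.
Qed.

Lemma psibar_rev t c : (1 <= c <= Lm)%nat -> psi t (Lm + 1 - c) = psi t c.
Proof.
  revert c; induction t as [|t IH]; intros c Hc; [reflexivity|].
  rewrite !psibar_S, (sumR_rev (Lm + 1 - c) _ (Lm + w)) by lia.
  replace (Lm + w - (Lm + 1 - c + w - 1))%nat with c by lia.
  replace (Lm + w - (Lm + 1 - c))%nat with (c + w - 1)%nat by lia.
  erewrite sumR_ext; [reflexivity|].
  intros r Hr; cbv beta; rewrite phibar_rev; auto; lia.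
Qed.

Hypotheses (HP : 0 < P) (Hs2 : 0 < s2).

Lemma kappa_snr_gt0 : 0 < kappa w Lm * snr P s2.
Proof.
  unfold kappa, snr; apply Rmult_lt_0_compat; apply Rdiv_lt_0_compat; auto;
    apply lt_0_INR; lia.
Qed.

Lemma phibar_gt0 t r : 0 < phi t r.
Proof.
  unfold phibar; apply Rmult_lt_0_compat; [lra|].
  assert (0 <= sumR (clo w r) (chi Lm r) (fun c => psi t c)).
  { apply sumR_aux_ge0; intros; destruct (psibar_0_or_1 t i); lra. }
  assert (0 < kappa w Lm * snr P s2 / INR w).
  { apply Rdiv_lt_0_compat; [apply kappa_snr_gt0 | apply lt_0_INR; lia]. }
  nra.
Qed.

Lemma inv_phibar_le t r t' r' :
  sumR (clo w r) (chi Lm r) (fun c => psi t c) <= sumR (clo w r') (chi Lm r') (fun c => psi t' c) ->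
  1 / phi t' r' <= 1 / phi t r.
Proof.
  intros Hload; unfold Rdiv; rewrite !Rmult_1_l.
  apply Rinv_le_contravar; [apply phibar_gt0|].
  assert (0 < kappa w Lm * snr P s2 / INR w).
  { apply Rdiv_lt_0_compat; [apply kappa_snr_gt0 | apply lt_0_INR; lia]. }
  unfold phibar; apply Rmult_le_compat_l; [lra|]; nra.
Qed.

(* If columns [1..s] are decoded at time [t], column [c + s] sees at most the
   interference column [c] saw at time [0]. *)
Lemma psibar_shift t c s :
  psi 1 c = 0 -> (forall i, (1 <= i <= s)%nat -> psi t i = 0) -> psi (S t) (c + s) = 0.
Proof.
  intros H1 Hdec; apply psibar_S_eq0 in H1; apply psibar_S_eq0.
  eapply Rlt_le_trans; [exact H1|].
  apply Rmult_le_compat_l; [left; apply Rdiv_lt_0_compat; auto; apply lt_0_INR; lia|].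
  rewrite !sumR_window, sumR_aux_shift by lia.
  apply sumR_aux_le; intros r _; apply inv_phibar_le.
  rewrite sumR_psibar0; eapply Rle_trans.
  - apply (sumR_aux_count _ _ (S s)).
    + intros i _; destruct (psibar_0_or_1 t i); lra.
    + intros i Hi; apply Hdec; unfold clo in Hi; lia.
  - apply le_INR; unfold clo, chi; lia.
Qed.

Lemma kappa_inv_phibar0 r :
  kappa w Lm * (P / INR w) * (1 / phi 0 r) =
  dlogload (kappa w Lm * snr P s2) w (INR (S (chi Lm r) - clo w r)).
Proof.
  pose proof kappa_snr_gt0 as Ha.
  assert (HW : 0 < INR w) by (apply lt_0_INR; lia).
  assert (HN := pos_INR (S (chi Lm r) - clo w r)).
  unfold phibar, dlogload; rewrite sumR_psibar0.
  set (N := INR (S (chi Lm r) - clo w r)) in *; set (a := kappa w Lm * snr P s2) in *.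
  replace (kappa w Lm * (P / INR w)) with (a * s2 / INR w) by (unfold a, snr; field; lra).
  replace (kappa w Lm * snr P s2 / INR w * N) with (a * N / INR w) by (unfold a; field; lra).
  field; repeat split; nra.
Qed.

(* Rows [c..w-1] carry [r] columns and rows [w..c+w-1] carry [w]; the first
   group is bounded below by telescoping [logload]. *)
Lemma left_column_rate c :
  (2 * w - 1 <= Lm)%nat -> (1 <= c <= w)%nat ->
  let a := kappa w Lm * snr P s2 in
  INR c * dlogload a w (INR w) + logload a w (INR w) - logload a w (INR c) <=
  kappa w Lm * (P / INR w * sumR c (c + w - 1) (fun r => 1 / phi 0 r)).
Proof.
  intros HL Hc a.
  rewrite sumR_window, <- Rmult_assoc, <- sumR_aux_scal by lia.
  rewrite (sumR_aux_ext _ _ _ (fun r => dlogload a w (INR (S (chi Lm r) - clo w r))))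
    by (intros; apply kappa_inv_phibar0).
  replace (sumR_aux c w) with (sumR_aux c (w - c + c)) by (f_equal; lia).
  rewrite sumR_aux_add.
  rewrite (sumR_aux_ext (c + (w - c)) _ _ (fun _ => dlogload a w (INR w)))
    by (intros; do 3 f_equal; unfold chi, clo; lia).
  rewrite sumR_aux_const.
  assert (Htel := sumR_aux_telescope c (w - c)
                    (fun r => dlogload a w (INR (S (chi Lm r) - clo w r)))
                    (fun i => logload a w (INR i))).
  replace (c + (w - c))%nat with w in Htel by lia.
  enough (logload a w (INR w) - logload a w (INR c) <=
          sumR_aux c (w - c) (fun r => dlogload a w (INR (S (chi Lm r) - clo w r)))) by lra.
  apply Htel; intros i Hi; cbv beta.
  replace (S (chi Lm i) - clo w i)%nat with i by (unfold chi, clo; lia).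
  rewrite S_INR; apply logload_succ_le; [apply kappa_snr_gt0 | lia | apply pos_INR].
Qed.

Lemma psibar1_eq0 c :
  (2 * w - 1 <= Lm)%nat -> (1 <= c <= w)%nat ->
  let a := kappa w Lm * snr P s2 in
  2 * Rt * kappa w Lm < INR c * dlogload a w (INR w) + logload a w (INR w) - logload a w (INR c) ->
  psi 1 c = 0 /\ psi 1 (Lm + 1 - c) = 0.
Proof.
  intros HL Hc a Hrate.
  assert (Hk : 0 < kappa w Lm) by (unfold kappa; apply Rdiv_lt_0_compat; apply lt_0_INR; lia).
  assert (H1 : psi 1 c = 0).
  { apply psibar_S_eq0, (Rmult_lt_reg_l (kappa w Lm)); auto.
    pose proof (left_column_rate c HL Hc) as Hcol; cbv zeta in Hcol; unfold a in Hrate; lra. }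
  split; [|rewrite psibar_rev by lia]; exact H1.
Qed.

Lemma psibar_decoded_from_ends c0 :
  (1 <= c0 <= Lm)%nat -> (forall c, (1 <= c <= c0)%nat -> psi 1 c = 0) ->
  forall t, (1 <= t)%nat -> forall c, (1 <= c <= Lm)%nat ->
  (Nat.min c (Lm + 1 - c) <= t * c0)%nat -> psi t c = 0.
Proof.
  intros Hc0 H1 t; induction t as [|t IH]; intros Ht c Hc Hmin; [lia|].
  assert (Hleft : forall c, (1 <= c <= Lm)%nat -> (c <= S t * c0)%nat -> psi (S t) c = 0).
  { clear c Hc Hmin; intros c Hc Hct.
    set (c' := Nat.min c c0); replace c with (c' + (c - c'))%nat by lia.
    apply psibar_shift; [apply H1; lia|].
    intros i Hi; apply IH; lia. }
  destruct (Nat.le_gt_cases c (Lm + 1 - c)).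
  - apply Hleft; lia.
  - rewrite <- psibar_rev by lia; apply Hleft; lia.
Qed.

End StateEvolution.

(* With [e = exp y - 1], the hypothesis on [w] is [e * (1 + a / w) < a], i.e.
   [y < logload (w + 1) - logload 1]. *)
Lemma first_column_rate a w y :
  0 < a -> (1 <= w)%nat -> 0 < y -> y < ln (1 + a) ->
  INR w > / (1 / (exp y - 1) - 1 / a) ->
  y < INR 1 * dlogload a w (INR w) + logload a w (INR w) - logload a w (INR 1).
Proof.
  intros Ha Hw Hy Hya Hwy.
  assert (HW : 0 < INR w) by (apply lt_0_INR; lia).
  set (e := exp y - 1) in *.
  assert (He : 0 < e) by (unfold e; pose proof (exp_ineq1 y ltac:(lra)); lra).
  assert (Hea : e < a).
  { pose proof (exp_increasing _ _ Hya) as H; rewrite exp_ln in H by lra; unfold e; lra. }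
  assert (HD : 1 / e - 1 / a = (a - e) / (a * e)) by (field; lra).
  assert (H1 : 1 < INR w * ((a - e) / (a * e))).
  { rewrite <- HD; assert (HDp : 0 < 1 / e - 1 / a) by (rewrite HD; apply Rdiv_lt_0_compat; nra).
    pose proof (Rmult_lt_compat_r (1 / e - 1 / a) _ _ HDp Hwy) as H.
    rewrite Rinv_l in H by lra; lra. }
  assert (H2 : a * e < INR w * (a - e)).
  { pose proof (Rmult_lt_compat_r (a * e) _ _ ltac:(nra) H1) as H.
    replace (INR w * ((a - e) / (a * e)) * (a * e)) with (INR w * (a - e)) in H by (field; lra).
    lra. }
  assert (Hkey : e * (1 + a / INR w) < a).
  { apply (Rmult_lt_reg_r (INR w)); auto.
    replace (e * (1 + a / INR w) * INR w) with (e * INR w + a * e) by (field; lra); nra. }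
  pose proof (logload_succ_le a w (INR w) Ha Hw (pos_INR w)).
  enough (y < logload a w (INR w + 1) - logload a w 1) by (simpl INR; lra).
  unfold logload.
  assert (Hp : 0 < 1 + a * 1 / INR w) by (assert (0 < a * 1 / INR w) by (apply Rdiv_lt_0_compat; lra); lra).
  assert (Hy1 : y = ln (1 + e)) by (unfold e; rewrite <- (ln_exp y) at 1; f_equal; ring).
  enough (ln (1 + e) + ln (1 + a * 1 / INR w) < ln (1 + a * (INR w + 1) / INR w)) by lra.
  rewrite <- ln_mult by lra; apply ln_increasing; [nra|].
  replace (a * 1 / INR w) with (a / INR w) by (field; lra).
  replace (a * (INR w + 1) / INR w) with (a + a / INR w) by (field; lra).
  nra.
Qed.

(* [logload c < a c / w], and the remaining terms are [ln (1 + a) - c a^2 / (w (1 + a))]. *)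
Lemma small_column_rate a w c y :
  0 < a -> (1 <= w)%nat -> (1 <= c)%nat ->
  INR c < INR w * (1 + a) / a ^ 2 * (ln (1 + a) - y) ->
  y < INR c * dlogload a w (INR w) + logload a w (INR w) - logload a w (INR c).
Proof.
  intros Ha Hw Hc Hcy.
  assert (HW : 0 < INR w) by (apply lt_0_INR; lia).
  assert (HC : 0 < INR c) by (apply lt_0_INR; lia).
  unfold dlogload, logload; replace (a * INR w / INR w) with a by (field; lra).
  pose proof (ln_1plus_lt (a * INR c / INR w) ltac:(apply Rdiv_lt_0_compat; nra)).
  assert (Hcy' := Rmult_lt_compat_r (a ^ 2 / (INR w * (1 + a))) _ _
                 ltac:(apply Rdiv_lt_0_compat; nra) Hcy).
  replace (INR w * (1 + a) / a ^ 2 * (ln (1 + a) - y) * (a ^ 2 / (INR w * (1 + a))))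
    with (ln (1 + a) - y) in Hcy' by (field; split; nra).
  replace (INR c * (a / INR w / (1 + a)))
    with (a * INR c / INR w - INR c * (a ^ 2 / (INR w * (1 + a)))) by (field; split; nra).
  lra.
Qed.

Lemma ceil_half_bound Lm c0 t c :
  (1 <= c0)%nat -> (1 <= c <= Lm)%nat -> ((Lm + 2 * c0 - 1) / (2 * c0) <= t)%nat ->
  (1 <= t)%nat /\ (Nat.min c (Lm + 1 - c) <= t * c0)%nat.
Proof.
  intros Hc0 Hc Ht.
  pose proof (Nat.div_mod (Lm + 2 * c0 - 1) (2 * c0) ltac:(lia)).
  pose proof (Nat.mod_upper_bound (Lm + 2 * c0 - 1) (2 * c0) ltac:(lia)).
  pose proof (Nat.mul_le_mono_l _ _ (2 * c0) Ht).
  split; nia.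
Qed.

Theorem mainTheorem8 (omega Lam : nat) (P sigma2 Rt : R) :
  (1 <= omega)%nat ->
  (2 * omega - 1 <= Lam)%nat ->
  0 < P -> 0 < sigma2 ->
  0 < Rt ->
  Rt < 1 / (2 * kappa omega Lam) * ln (1 + kappa omega Lam * snr P sigma2) ->
  (* (1) *)
  (INR omega > / (1 / (exp (2 * Rt * kappa omega Lam) - 1)
                  - 1 / (kappa omega Lam * snr P sigma2)) ->
     psibar P sigma2 Rt omega Lam 1 1 = 0 /\
     psibar P sigma2 Rt omega Lam 1 Lam = 0)
  /\
  (* (2) *)
  (forall c : nat, (1 <= c <= omega - 1)%nat ->
     INR c < INR omega * (1 + kappa omega Lam * snr P sigma2)
               / (kappa omega Lam * snr P sigma2) ^ 2
               * (ln (1 + kappa omega Lam * snr P sigma2) - 2 * Rt * kappa omega Lam) ->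
     psibar P sigma2 Rt omega Lam 1 c = 0 /\
     psibar P sigma2 Rt omega Lam 1 (Lam + 1 - c) = 0)
  /\
  (* (3) *)
  (forall c0 : nat, (1 <= c0 <= omega - 1)%nat ->
     (forall c : nat, (1 <= c <= Lam)%nat -> (c <= c0 \/ Lam + 1 - c0 <= c)%nat ->
        psibar P sigma2 Rt omega Lam 1 c = 0) ->
     (forall t : nat, (1 <= t)%nat ->
        forall c : nat, (1 <= c <= Lam)%nat ->
          (Nat.min c (Lam + 1 - c) <= t * c0)%nat ->
          psibar P sigma2 Rt omega Lam t c = 0)
     /\
     (forall t : nat, ((Lam + 2 * c0 - 1) / (2 * c0) <= t)%nat ->
        forall c : nat, (1 <= c <= Lam)%nat ->
          psibar P sigma2 Rt omega Lam t c = 0)).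
Proof.
  intros Hw HL HP Hs HR HRlt.
  assert (HLam : (1 <= Lam)%nat) by lia.
  assert (Hk : 0 < kappa omega Lam) by (unfold kappa; apply Rdiv_lt_0_compat; apply lt_0_INR; lia).
  pose proof (kappa_snr_gt0 P sigma2 omega Lam Hw HLam HP Hs) as Ha.
  assert (Hy : 2 * Rt * kappa omega Lam < ln (1 + kappa omega Lam * snr P sigma2)).
  { apply (Rmult_lt_compat_l (2 * kappa omega Lam)) in HRlt; [|lra].
    replace (2 * kappa omega Lam * (1 / (2 * kappa omega Lam) * ln (1 + kappa omega Lam * snr P sigma2)))
      with (ln (1 + kappa omega Lam * snr P sigma2)) in HRlt by (field; lra).
    lra. }
  split; [|split].
  - intros Hom.
    destruct (psibar1_eq0 P sigma2 Rt omega Lam Hw HLam HP Hs 1 HL ltac:(lia)) as [H1 HLam1].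
    { apply first_column_rate; auto; nra. }
    rewrite Nat.add_sub in HLam1; auto.
  - intros c Hc Hcx.
    apply psibar1_eq0; auto; [lia|].
    apply small_column_rate; auto; lia.
  - intros c0 Hc0 H1.
    assert (Hdec := psibar_decoded_from_ends P sigma2 Rt omega Lam Hw HLam HP Hs c0
                      ltac:(lia) (fun c Hc => H1 c ltac:(lia) ltac:(lia))).
    split; [exact Hdec|].
    intros t Ht c Hc; destruct (ceil_half_bound Lam c0 t c) as [Ht1 Hmin]; auto; lia.
Qed.
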